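(* Let $W:\mathcal X\to\mathcal Y$ be a cyclo-symmetric DMC with $|\mathcal Y|>2|\mathcal X|$, let $L\ge2|\mathcal X|$ be a multiple of $|\mathcal X|$, and let the input distribution be uniform, $\pi(x)=1/|\mathcal X|$. Then $$\min\big\{I(W)-I(Q):\ Q\preccurlyeq W,\ |Q|\le L,\ Q\text{ cyclo-symmetric}\big\}\le \nu(|\mathcal X|)\,L^{-\frac{2}{|\mathcal X|-1}}.$$
   Context: $I(\cdot)$ is input–output mutual information (natural log) under the given input distribution. $Q\preccurlyeq W$ means there is a channel $\Phi$ from the output alphabet of $W$ to that of $Q$ with $Q(z|x)=\sum_yW(y|x)\Phi(z|y)$; $|Q|$ is the output alphabet size of $Q$. A channel $W:\mathcal X\to\mathcal Y$ is cyclo-symmetric if $\mathcal X=\{0,1,\dots,|\mathcal X|-1\}$, $|\mathcal Y|$ is a multiple of $|\mathcal X|$, and $\mathcal Y$ is partitioned into $|\mathcal Y|/|\mathcal X|$ disjoint sets $\mathcal Y_i=\{y_i^{(0)},\dots,y_i^{(|\mathcal X|-1)}\}$ such that $W(y_i^{(0)}|x)=W(y_i^{(\theta)}|x+\theta)$ for all $i$, all $x$ and all $0\le\theta\le|\mathcal X|-1$, with $x+\theta$ taken modulo $|\mathcal X|$. The constant is $$\nu(n)=\frac{\pi n(n-1)}{2\left(\sqrt{1+\frac{1}{2(n-1)}}-1\right)^2}\left(\frac{2n}{\Gamma\!\left(1+\frac{n-1}{2}\right)}\right)^{\frac{2}{n-1}},$$ with $\pi=3.14159\ldots$ and $\Gamma$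 the Gamma function. *)

From Stdlib Require Import Reals Lra Lia.
Open Scope R_scope.

(* A channel with input alphabet {0,..,nx-1} and output alphabet {0,..,ny-1}
   is represented by its transition function W y x = W(y|x). *)
Definition channel := nat -> nat -> R.

Fixpoint rsum (n : nat) (f : nat -> R) : R :=
  match n with O => 0 | S k => rsum k f + f k end.

Definition is_channel (nx ny : nat) (W : channel) : Prop :=
  (forall x y, (x < nx)%nat -> (y < ny)%nat -> 0 <= W y x) /\
  (forall x, (x < nx)%nat -> rsum ny (fun y => W y x) = 1).

Definition mi_uniform (nx ny : nat) (W : channel) : R :=
  rsum nx (fun x => rsum ny (fun y =>
    if Req_EM_T (W y x) 0 then 0
    else (/ INR nx) * W y x *
         ln (W y x / ((/ INR nx) * rsum nx (fun x' => W y x'))))).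

Definition degraded (nx ny nz : nat) (Q W : channel) : Prop :=
  exists Phi : channel, is_channel ny nz Phi /\
    forall x z, (x < nx)%nat -> (z < nz)%nat ->
      Q z x = rsum ny (fun y => W y x * Phi z y).

(* cyclo-symmetric: |Y| = k |X| and Y is partitioned into k sets
   Y_i = {f i 0, ..., f i (|X|-1)} (f a bijection from [0,k)x[0,|X|) onto
   [0,|Y|)) with W(y_i^(0)|x) = W(y_i^(theta)| x+theta mod |X|). *)
Definition cyclo_symmetric (nx ny : nat) (W : channel) : Prop :=
  exists (k : nat) (f : nat -> nat -> nat),
    ny = (k * nx)%nat /\
    (forall i t, (i < k)%nat -> (t < nx)%nat -> (f i t < ny)%nat) /\
    (forall i t i' t', (i < k)%nat -> (t < nx)%nat -> (i' < k)%nat -> (t' < nx)%nat ->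
        f i t = f i' t' -> i = i' /\ t = t') /\
    (forall y, (y < ny)%nat -> exists i t, (i < k)%nat /\ (t < nx)%nat /\ f i t = y) /\
    (forall i x t, (i < k)%nat -> (x < nx)%nat -> (t < nx)%nat ->
        W (f i 0%nat) x = W (f i t) ((x + t) mod nx)%nat).

(* gamma_half k = Gamma(1 + k/2), defined via Gamma(1)=1, Gamma(3/2)=sqrt(pi)/2
   and Gamma(s+1) = s Gamma(s). *)
Fixpoint gamma_half (k : nat) : R :=
  match k with
  | O => 1
  | S O => sqrt PI / 2
  | S (S j as k') => (1 + INR j / 2) * gamma_half j
  end.

Definition nu (n : nat) : R :=
  PI * INR n * (INR n - 1)
  / (2 * (sqrt (1 + / (2 * (INR n - 1))) - 1) ^ 2)
  * Rpower (2 * INR n / gamma_half (n - 1)) (2 / (INR n - 1)).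

(* By cyclo-symmetry, I(W) - ln |X| is |X| times the sum over the output orbits of the negative
   entropy of one column per orbit, rotated so that its largest entry sits at input 0.  Quantise
   each such column by the cells of the grid j^2 / N^2 that contain its ratios at the K = |X| - 1
   other inputs, and merge, output by output, all orbits falling in the same cell: this is a
   degraded cyclo-symmetric channel with N^K |X| outputs.  Merging values whose ratios lie in
   [a, b] and are at least l loses at most (b - a)^2 / (4 l) per unit of mass, i.e. O(1 / N^2) on
   each grid coordinate and O(|X| K^2 / N^2) on input 0, whose ratio is at least 1 / |X|.  Taking
   N maximal with N^K |X| <= L yields the bound. *)

From Stdlib Require Import Reals.
Open Scope R_scope.
From Stdlib Require Import Lra Lia.

Lemma rsum_ext n f g : (forall i, (i < n)%nat -> f i = g i) -> rsum n f = rsum n g.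
Proof.
  induction n as [|n IH]; intros H; simpl; auto.
  rewrite IH by (intros; apply H; lia). rewrite (H n) by lia. reflexivity.
Qed.

Lemma rsum_plus n f g : rsum n (fun i => f i + g i) = rsum n f + rsum n g.
Proof. induction n; simpl; [lra|]. rewrite IHn. lra. Qed.

Lemma rsum_minus n f g : rsum n (fun i => f i - g i) = rsum n f - rsum n g.
Proof. induction n; simpl; [lra|]. rewrite IHn. lra. Qed.

Lemma rsum_scal n c f : rsum n (fun i => c * f i) = c * rsum n f.
Proof. induction n; simpl; [lra|]. rewrite IHn. lra. Qed.

Lemma rsum_const n c : rsum n (fun _ => c) = INR n * c.
Proof. induction n; simpl rsum; [simpl; lra|]. rewrite IHn, S_INR. lra. Qed.

Lemma rsum_zero n : rsum n (fun _ => 0) = 0.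
Proof. rewrite rsum_const. lra. Qed.

Lemma rsum_le n f g : (forall i, (i < n)%nat -> f i <= g i) -> rsum n f <= rsum n g.
Proof.
  induction n; simpl; intros H; [lra|].
  specialize (IHn (fun i Hi => H i ltac:(lia))). specialize (H n ltac:(lia)). lra.
Qed.

Lemma rsum_nonneg n f : (forall i, (i < n)%nat -> 0 <= f i) -> 0 <= rsum n f.
Proof. intros H. rewrite <- (rsum_zero n). apply rsum_le. auto. Qed.

Lemma rsum_term_le n f i :
  (forall j, (j < n)%nat -> 0 <= f j) -> (i < n)%nat -> f i <= rsum n f.
Proof.
  induction n; simpl; intros H Hi; [lia|].
  assert (0 <= rsum n f) by (apply rsum_nonneg; intros; apply H; lia).
  destruct (Nat.eq_dec i n) as [->|Hne]; [lra|].
  assert (f i <= rsum n f) by (apply IHn; [intros; apply H|]; lia).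
  specialize (H n ltac:(lia)). lra.
Qed.

Lemma rsum_swap n m (f : nat -> nat -> R) :
  rsum n (fun i => rsum m (fun j => f i j)) = rsum m (fun j => rsum n (fun i => f i j)).
Proof.
  induction n; simpl.
  - rewrite rsum_zero. auto.
  - rewrite IHn, <- rsum_plus. auto.
Qed.

Lemma rsum_if n (b : bool) f :
  (if b then rsum n f else 0) = rsum n (fun x => if b then f x else 0).
Proof. destruct b; [|rewrite rsum_zero]; auto. Qed.

Lemma rsum_delta n t0 (g : nat -> R) : (t0 < n)%nat ->
  rsum n (fun t => if Nat.eqb t t0 then g t else 0) = g t0.
Proof.
  induction n; intros H; [lia|]. simpl.
  destruct (Nat.eq_dec t0 n) as [->|Hne].
  - rewrite Nat.eqb_refl, (rsum_ext _ _ (fun _ => 0)), rsum_zero; [lra|].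
    intros i Hi. destruct (Nat.eqb_spec i n); [lia|auto].
  - rewrite IHn by lia. destruct (Nat.eqb_spec n t0); [lia|lra].
Qed.

Lemma rsum_first n f : rsum (S n) f = f 0%nat + rsum n (fun i => f (S i)).
Proof. induction n; simpl in *; [lra|]. rewrite IHn. lra. Qed.

Lemma rsum_app p q f : rsum (p + q) f = rsum p f + rsum q (fun u => f (p + u)%nat).
Proof.
  induction q; simpl.
  - rewrite Nat.add_0_r. lra.
  - rewrite Nat.add_succ_r. simpl. rewrite IHq. lra.
Qed.

Lemma rsum_mul_index a b h :
  rsum (a * b) h = rsum a (fun c => rsum b (fun u => h (c * b + u)%nat)).
Proof. induction a; simpl; auto. rewrite Nat.add_comm, rsum_app, IHa. auto. Qed.

Lemma rsum_shift n c g : (0 < n)%nat ->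
  rsum n (fun x => g ((x + c) mod n)%nat) = rsum n g.
Proof.
  intros Hn. revert g. induction c as [|c IH]; intros g.
  - apply rsum_ext. intros. rewrite Nat.add_0_r, Nat.mod_small; auto.
  - transitivity (rsum n (fun x => g ((x + 1) mod n)%nat)).
    + rewrite <- (IH (fun y => g ((y + 1) mod n)%nat)).
      apply rsum_ext. intros i Hi. f_equal.
      rewrite Nat.Div0.add_mod_idemp_l. f_equal. lia.
    + destruct n as [|m]; [lia|].
      rewrite (rsum_first m g). change (rsum (S m) ?h) with (rsum m h + h m).
      rewrite (rsum_ext m _ (fun i => g (S i))).
      * replace ((m + 1) mod S m)%nat with 0%nat; [lra|].
        rewrite Nat.add_1_r, Nat.Div0.mod_same. reflexivity.
      * intros i Hi. f_equal. rewrite Nat.mod_small; lia.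
Qed.

Lemma rsum_partition k Nc (code : nat -> nat) (g : nat -> R) :
  (forall i, (i < k)%nat -> (code i < Nc)%nat) ->
  rsum k g = rsum Nc (fun c => rsum k (fun i => if Nat.eqb (code i) c then g i else 0)).
Proof.
  intros H. rewrite rsum_swap. apply rsum_ext. intros i Hi.
  rewrite (rsum_ext Nc _ (fun c => if Nat.eqb c (code i) then g i else 0)).
  - symmetry. apply (rsum_delta Nc (code i) (fun _ => g i)). auto.
  - intros c Hc. rewrite Nat.eqb_sym. auto.
Qed.

Section Reindex.
Variables (k n ny : nat) (f : nat -> nat -> nat).
Hypothesis f_range : forall i t, (i < k)%nat -> (t < n)%nat -> (f i t < ny)%nat.
Hypothesis f_inj : forall i t i' t', (i < k)%nat -> (t < n)%nat -> (i' < k)%nat -> (t' < n)%nat ->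
  f i t = f i' t' -> i = i' /\ t = t'.
Hypothesis f_surj : forall y, (y < ny)%nat -> exists i t, (i < k)%nat /\ (t < n)%nat /\ f i t = y.

Lemma rsum2_indicator i0 t0 (h : nat -> nat -> R) : (i0 < k)%nat -> (t0 < n)%nat ->
  rsum k (fun i => rsum n (fun t => if Nat.eqb (f i t) (f i0 t0) then h i t else 0)) = h i0 t0.
Proof.
  intros Hi0 Ht0.
  rewrite (rsum_ext k _ (fun i => if Nat.eqb i i0 then h i t0 else 0)).
  { apply (rsum_delta k i0 (fun i => h i t0)); auto. }
  intros i Hi. destruct (Nat.eqb_spec i i0) as [->|Hne].
  - rewrite (rsum_ext n _ (fun t => if Nat.eqb t t0 then h i0 t else 0)).
    { apply (rsum_delta n t0 (fun t => h i0 t)); auto. }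
    intros t Ht. destruct (Nat.eqb_spec (f i0 t) (f i0 t0)) as [E|E];
      destruct (Nat.eqb_spec t t0); subst; auto.
    + destruct (f_inj i0 t i0 t0); auto; lia.
    + congruence.
  - rewrite (rsum_ext n _ (fun _ => 0)); [apply rsum_zero|].
    intros t Ht. destruct (Nat.eqb_spec (f i t) (f i0 t0)) as [E|E]; auto.
    destruct (f_inj i t i0 t0); auto; lia.
Qed.

Lemma rsum_reindex2 (g : nat -> R) :
  rsum ny g = rsum k (fun i => rsum n (fun t => g (f i t))).
Proof.
  rewrite (rsum_ext ny g (fun y =>
    rsum k (fun i => rsum n (fun t => if Nat.eqb (f i t) y then g y else 0)))).
  - rewrite rsum_swap. apply rsum_ext. intros i Hi. rewrite rsum_swap.
    apply rsum_ext. intros t Ht.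
    rewrite (rsum_ext ny _ (fun y => if Nat.eqb y (f i t) then g y else 0)).
    + apply rsum_delta. auto.
    + intros y Hy. rewrite Nat.eqb_sym. auto.
  - intros y Hy. destruct (f_surj y Hy) as (i0 & t0 & Hi0 & Ht0 & <-).
    symmetry. apply (rsum2_indicator i0 t0 (fun _ _ => g (f i0 t0))); auto.
Qed.

End Reindex.

Lemma mod_sub_add n y t : (y < n)%nat -> (t < n)%nat ->
  (((y + (n - t)) mod n + t) mod n = y)%nat.
Proof.
  intros Hy Ht. rewrite Nat.Div0.add_mod_idemp_l.
  replace (y + (n - t) + t)%nat with (y + 1 * n)%nat by lia.
  rewrite Nat.Div0.mod_add. apply Nat.mod_small; auto.
Qed.

Lemma mod_add_eq_iff n a u t : (a < n)%nat -> (u < n)%nat -> (t < n)%nat ->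
  ((t + a) mod n = u <-> t = (u + (n - a)) mod n)%nat.
Proof.
  intros Ha Hu Ht. split.
  - intros <-. rewrite Nat.Div0.add_mod_idemp_l.
    replace (t + a + (n - a))%nat with (t + 1 * n)%nat by lia.
    rewrite Nat.Div0.mod_add, Nat.mod_small; auto.
  - intros ->. apply mod_sub_add; auto.
Qed.

Lemma mod_add_cancel_r n A B r : (0 < n)%nat -> (r < n)%nat ->
  ((A + r) mod n = (B + r) mod n -> A mod n = B mod n)%nat.
Proof.
  intros Hn Hr H.
  rewrite <- (Nat.Div0.mod_add A 1 n), <- (Nat.Div0.mod_add B 1 n).
  replace (A + 1 * n)%nat with (A + r + (n - r))%nat by lia.
  replace (B + 1 * n)%nat with (B + r + (n - r))%nat by lia.
  rewrite <- (Nat.Div0.add_mod_idemp_l (A + r)), <- (Nat.Div0.add_mod_idemp_l (B + r)), H.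
  reflexivity.
Qed.

Lemma mod_sub_sub n a u x : (a < n)%nat -> (u < n)%nat -> (x < n)%nat ->
  ((x + (n - (u + (n - a)) mod n)) mod n = ((x + (n - u)) mod n + a) mod n)%nat.
Proof.
  intros Ha Hu Hx. rewrite Nat.Div0.add_mod_idemp_l.
  set (r := ((u + (n - a)) mod n)%nat).
  assert (Hr : (r < n)%nat) by (apply Nat.mod_upper_bound; lia).
  assert (Hra : ((r + a) mod n = u)%nat) by (apply (mod_add_eq_iff n a u r); auto).
  apply (mod_add_cancel_r n _ _ r); [lia|auto|].
  replace (x + (n - r) + r)%nat with (x + 1 * n)%nat by lia.
  replace (x + (n - u) + a + r)%nat with (x + (n - u) + (r + a))%nat by lia.
  rewrite <- (Nat.Div0.add_mod_idemp_r (x + (n - u)) (r + a)), Hra.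
  replace (x + (n - u) + u)%nat with (x + 1 * n)%nat by lia. reflexivity.
Qed.

Definition kl_term (v s : R) : R := if Req_EM_T v 0 then 0 else v * ln (v / s).

(* [neg_entropy n v = - (rsum n v) * H (v / rsum n v)]. *)
Definition neg_entropy (n : nat) (v : nat -> R) : R := rsum n (fun x => kl_term (v x) (rsum n v)).

Lemma kl_term0 s : kl_term 0 s = 0.
Proof. unfold kl_term. destruct (Req_EM_T 0 0); lra. Qed.

Lemma ln_le_sub1 x : 0 < x -> ln x <= x - 1.
Proof. intros Hx. pose proof (exp_ineq1_le (ln x)). rewrite exp_ln in H; lra. Qed.

(* Tangent bound [ln t <= t - 1] at [t = v / (s m)], followed by [(v - a s) (b s - v) >= 0]. *)
Lemma kl_term_le v s m a b : 0 <= s -> a * s <= v -> v <= b * s -> 0 <= v -> 0 < m ->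
  kl_term v s <= v * ln m + (((a + b) * v - a * b * s) / m - v).
Proof.
  intros Hs Ha Hb Hv Hm. unfold kl_term. destruct (Req_EM_T v 0) as [->|E].
  - destruct (Req_dec s 0) as [->|Es].
    + replace (((a + b) * 0 - a * b * 0) / m - 0) with 0 by (field; lra). lra.
    + assert (0 <= - a * b * s / m)
        by (unfold Rdiv; apply Rmult_le_pos; [nra|left; apply Rinv_0_lt_compat; lra]).
      replace (((a + b) * 0 - a * b * s) / m - 0) with (- a * b * s / m) by (field; lra). lra.
  - assert (Hs' : 0 < s) by (destruct (Req_dec s 0) as [->|]; lra).
    assert (Ht : 0 < v / (s * m)) by (apply Rdiv_lt_0_compat; nra).
    replace (ln (v / s)) with (ln m + ln (v / (s * m)))
      by (rewrite <- ln_mult by lra; f_equal; field; lra).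
    pose proof (ln_le_sub1 _ Ht).
    assert (v * ln (v / (s * m)) <= v * (v / (s * m) - 1)) by (apply Rmult_le_compat_l; lra).
    assert (v * (v / (s * m)) <= ((a + b) * v - a * b * s) / m).
    { apply Rmult_le_reg_r with (s * m); [nra|].
      replace (v * (v / (s * m)) * (s * m)) with (v * v) by (field; lra).
      replace (((a + b) * v - a * b * s) / m * (s * m))
        with ((a + b) * v * s - a * b * s * s) by (field; lra).
      nra. }
    nra.
Qed.

Lemma interval_gap_le a b m l : 0 < l -> l <= m ->
  a + b - a * b / m - m <= (b - a) ^ 2 / (4 * l).
Proof.
  intros Hl Hm.
  replace (a + b - a * b / m - m) with ((b - m) * (m - a) / m) by (field; lra).
  assert (Hm' : 0 < / m) by (apply Rinv_0_lt_compat; lra).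
  assert (0 <= (b - a) ^ 2 / (4 * l))
    by (unfold Rdiv; apply Rmult_le_pos; [apply pow2_ge_0|left; apply Rinv_0_lt_compat; lra]).
  destruct (Rle_dec ((b - m) * (m - a)) 0).
  - assert ((b - m) * (m - a) / m <= 0) by (unfold Rdiv; nra). lra.
  - assert ((b - m) * (m - a) <= (b - a) ^ 2 / 4) by (pose proof (pow2_ge_0 (a + b - 2 * m)); nra).
    apply Rle_trans with (((b - a) ^ 2 / 4) / m).
    + unfold Rdiv. apply Rmult_le_compat_r; lra.
    + replace ((b - a) ^ 2 / (4 * l)) with (((b - a) ^ 2 / 4) / l) by (field; lra).
      unfold Rdiv. apply Rmult_le_compat_l.
      * apply Rmult_le_pos; [apply pow2_ge_0|lra].
      * apply Rinv_le_contravar; lra.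
Qed.

(* [a + b - a b / m - m = (b - m) (m - a) / m] is the loss per unit of mass when the merged
   ratio [rsum k v / rsum k s] is [m]. *)
Lemma kl_merge_le k (v s : nat -> R) (a b l beta : R) :
  (forall i, (i < k)%nat ->
     0 <= s i /\ 0 <= v i /\ a * s i <= v i /\ v i <= b * s i /\ l * s i <= v i) ->
  0 <= beta ->
  (forall m, 0 < m -> l <= m -> a + b - a * b / m - m <= beta) ->
  rsum k (fun i => kl_term (v i) (s i)) - kl_term (rsum k v) (rsum k s) <= beta * rsum k s.
Proof.
  intros H Hbeta Hm.
  set (V := rsum k v). set (S := rsum k s).
  assert (HS0 : 0 <= S) by (apply rsum_nonneg; apply H).
  assert (HVb : V <= b * S) by (unfold V, S; rewrite <- rsum_scal; apply rsum_le; apply H).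
  assert (HVl : l * S <= V) by (unfold V, S; rewrite <- rsum_scal; apply rsum_le; apply H).
  destruct (Req_dec V 0) as [EV|EV].
  - rewrite EV, kl_term0, (rsum_ext k _ (fun _ => 0)), rsum_zero; [nra|].
    intros i Hi.
    assert (v i <= V) by (apply rsum_term_le; auto; apply H).
    replace (v i) with 0 by (pose proof (H i Hi); lra). apply kl_term0.
  - assert (0 <= V) by (apply rsum_nonneg; apply H).
    assert (HSp : 0 < S) by (destruct (Req_dec S 0) as [ES|]; [rewrite ES in HVb|]; lra).
    set (m := V / S).
    assert (Hmp : 0 < m) by (apply Rdiv_lt_0_compat; lra).
    assert (Hlm : l <= m).
    { apply Rmult_le_reg_r with S; auto. unfold m. replace (V / S * S) with V by (field; lra). lra. }
    assert (Hsum : rsum k (fun i => kl_term (v i) (s i)) <=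
       rsum k (fun i => ln m * v i + (a + b) / m * v i - a * b / m * s i - v i)).
    { apply rsum_le. intros i Hi. destruct (H i Hi) as (h1 & h2 & h3 & h4 & _).
      pose proof (kl_term_le (v i) (s i) m a b h1 h3 h4 h2 Hmp).
      replace (ln m * v i + (a + b) / m * v i - a * b / m * s i - v i)
        with (v i * ln m + (((a + b) * v i - a * b * s i) / m - v i)) by (field; lra).
      lra. }
    rewrite !rsum_minus, !rsum_plus, !rsum_scal in Hsum. fold V S in Hsum.
    replace (kl_term V S) with (V * ln m) by (unfold kl_term; destruct (Req_EM_T V 0); easy).
    assert (E : (a + b) / m * V - a * b / m * S - V = S * (a + b - a * b / m - m))
      by (unfold m; field; lra).
    assert (S * (a + b - a * b / m - m) <= S * beta) by (apply Rmult_le_compat_l; auto; lra).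
    lra.
Qed.

Lemma neg_entropy_ext n v w : (forall x, (x < n)%nat -> v x = w x) -> neg_entropy n v = neg_entropy n w.
Proof.
  intros H. unfold neg_entropy. rewrite (rsum_ext n v w H).
  apply rsum_ext. intros x Hx. rewrite H; auto.
Qed.

Lemma neg_entropy_shift n c v : (0 < n)%nat ->
  neg_entropy n (fun x => v ((x + c) mod n)%nat) = neg_entropy n v.
Proof.
  intros Hn. unfold neg_entropy. rewrite (rsum_shift n c v Hn).
  apply (rsum_shift n c (fun y => kl_term (v y) (rsum n v)) Hn).
Qed.

Lemma neg_entropy_zero n : neg_entropy n (fun _ => 0) = 0.
Proof.
  unfold neg_entropy. rewrite (rsum_ext n _ (fun _ => 0)) by (intros; apply kl_term0).
  apply rsum_zero.
Qed.

Lemma mi_uniform_neg_entropy n m V : (0 < n)%nat -> is_channel n m V ->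
  mi_uniform n m V = / INR n * rsum m (fun y => neg_entropy n (fun x => V y x)) + ln (INR n).
Proof.
  intros Hn [Hnn Hsum]. unfold mi_uniform, neg_entropy. rewrite rsum_swap.
  assert (HnR : 0 < INR n) by (apply lt_0_INR; lia).
  rewrite (rsum_ext m _ (fun y => / INR n *
     (rsum n (fun x => kl_term (V y x) (rsum n (fun x' => V y x')))
      + ln (INR n) * rsum n (fun x => V y x)))).
  - rewrite rsum_scal, rsum_plus, rsum_scal, (rsum_swap m n (fun y x => V y x)).
    rewrite (rsum_ext n _ (fun _ => 1)) by (intros; apply Hsum; auto).
    rewrite rsum_const. field. lra.
  - intros y Hy. rewrite <- (rsum_scal n (ln (INR n))), <- rsum_plus.
    rewrite <- (rsum_scal n (/ INR n) (fun x =>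
      kl_term (V y x) (rsum n (fun x' => V y x')) + ln (INR n) * V y x)).
    apply rsum_ext. intros x Hx.
    unfold kl_term. destruct (Req_EM_T (V y x) 0) as [->|E]; [lra|].
    assert (Hv : 0 < V y x) by (pose proof (Hnn x y Hx Hy); lra).
    assert (V y x <= rsum n (fun x' => V y x'))
      by (apply (rsum_term_le n (fun x' => V y x')); auto; intros; apply Hnn; auto).
    replace (ln (V y x / (/ INR n * rsum n (fun x' => V y x'))))
      with (ln (V y x / rsum n (fun x' => V y x')) + ln (INR n)); [ring|].
    rewrite <- ln_mult by (try apply Rdiv_lt_0_compat; lra). f_equal. field. lra.
Qed.

Fixpoint argmax (r : nat -> R) (l : nat) : nat :=
  match l with
  | O => O
  | S l' => if Rlt_dec (r (argmax r l')) (r (S l')) then S l' else argmax r l'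
  end.

Lemma argmax_le r l : (argmax r l <= l)%nat.
Proof. induction l; simpl; auto. destruct (Rlt_dec _ _); lia. Qed.

Lemma argmax_max r l x : (x <= l)%nat -> r x <= r (argmax r l).
Proof.
  revert x. induction l as [|l IH]; intros x Hx.
  - replace x with 0%nat by lia. simpl. lra.
  - simpl. destruct (Nat.eq_dec x (S l)) as [->|Hne].
    + destruct (Rlt_dec _ _); lra.
    + specialize (IH x ltac:(lia)). destruct (Rlt_dec _ _); lra.
Qed.

(* The quantisation grid [j^2 / N^2]: its cells have width [O(j / N^2)], which makes the loss
   per cell [O(1 / N^2)] in [interval_gap_le]. *)
Definition grid_pt (N j : nat) : R := INR j * INR j / (INR N * INR N).

Lemma grid_pt_le N j j' : (0 < N)%nat -> (j <= j')%nat -> grid_pt N j <= grid_pt N j'.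
Proof.
  intros HN Hj. unfold grid_pt. assert (0 < INR N) by (apply lt_0_INR; lia).
  apply le_INR in Hj. pose proof (pos_INR j).
  unfold Rdiv. apply Rmult_le_compat_r; [left; apply Rinv_0_lt_compat|]; nra.
Qed.

Lemma grid_pt_succ_sub N j : (0 < N)%nat ->
  grid_pt N (S j) - grid_pt N j = (2 * INR j + 1) / (INR N * INR N).
Proof. intros HN. unfold grid_pt. rewrite S_INR. field. apply not_0_INR. lia. Qed.

Lemma grid_pt_succ_sub_le N j : (j < N)%nat -> grid_pt N (S j) - grid_pt N j <= 2 / INR N.
Proof.
  intros Hj. rewrite grid_pt_succ_sub by lia.
  assert (INR j + 1 <= INR N) by (rewrite <- S_INR; apply le_INR; lia).
  assert (0 < INR j + 1) by (pose proof (pos_INR j); lra).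
  apply Rmult_le_reg_r with (INR N * INR N); [nra|].
  replace ((2 * INR j + 1) / (INR N * INR N) * (INR N * INR N)) with (2 * INR j + 1)
    by (field; lra).
  replace (2 / INR N * (INR N * INR N)) with (2 * INR N) by (field; lra). lra.
Qed.

Fixpoint grid_floor (N : nat) (q : R) (l : nat) : nat :=
  match l with
  | O => O
  | S l' => if Rle_dec (grid_pt N (S l')) q then S (grid_floor N q l') else grid_floor N q l'
  end.

Lemma grid_floor_le N q l : (grid_floor N q l <= l)%nat.
Proof. induction l; simpl; [lia|]. destruct (Rle_dec _ _); lia. Qed.

Lemma grid_floor_spec N q l : (0 < N)%nat -> 0 <= q ->
  grid_pt N (grid_floor N q l) <= q /\
  ((grid_floor N q l < l)%nat -> q < grid_pt N (S (grid_floor N q l))).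
Proof.
  intros HN Hq. induction l as [|l [H1 H2]].
  - simpl. unfold grid_pt. simpl. split; [|lia]. unfold Rdiv. rewrite !Rmult_0_l. auto.
  - pose proof (grid_floor_le N q l). simpl. destruct (Rle_dec (grid_pt N (S l)) q) as [E|E].
    + split.
      * pose proof (grid_pt_le N (S (grid_floor N q l)) (S l) HN ltac:(lia)). lra.
      * intros Hlt. assert (grid_floor N q l < l)%nat by lia.
        pose proof (grid_pt_le N (S (grid_floor N q l)) (S l) HN ltac:(lia)).
        specialize (H2 H0). lra.
    + split; auto. intros Hlt.
      destruct (Nat.eq_dec (grid_floor N q l) l) as [->|Ne]; [lra|]. apply H2. lia.
Qed.

Lemma grid_floor_bracket N q : (0 < N)%nat -> 0 <= q -> q <= 1 ->
  grid_pt N (grid_floor N q (N - 1)) <= q <= grid_pt N (S (grid_floor N q (N - 1))).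
Proof.
  intros HN Hq0 Hq1. destruct (grid_floor_spec N q (N - 1) HN Hq0) as [H1 H2].
  split; auto.
  destruct (Nat.eq_dec (grid_floor N q (N - 1)) (N - 1)) as [->|Ne].
  - replace (S (N - 1)) with N by lia. unfold grid_pt.
    replace (INR N * INR N / (INR N * INR N)) with 1; [lra|].
    field. apply not_0_INR. lia.
  - left. apply H2. pose proof (grid_floor_le N q (N - 1)). lia.
Qed.

Fixpoint digits_encode (N m : nat) (J : nat -> nat) : nat :=
  match m with O => O | S m' => (J (S m') + N * digits_encode N m' J)%nat end.

Fixpoint digits_decode (N m c x : nat) : nat :=
  match m with
  | O => O
  | S m' => if Nat.eqb x (S m') then (c mod N)%nat else digits_decode N m' (c / N) x
  end.

Lemma digits_encode_lt N m J :
  (forall x, (1 <= x <= m)%nat -> (J x < N)%nat) -> (digits_encode N m J < N ^ m)%nat.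
Proof.
  induction m; intros H; simpl; [lia|].
  specialize (IHm (fun x Hx => H x ltac:(lia))). specialize (H (S m) ltac:(lia)). nia.
Qed.

Lemma digits_decode_lt N m c x : (0 < N)%nat -> (digits_decode N m c x < N)%nat.
Proof.
  revert c. induction m; intros c HN; simpl; [lia|].
  destruct (Nat.eqb x (S m)); auto. apply Nat.mod_upper_bound. lia.
Qed.

Lemma digits_decode_encode N m J x : (0 < N)%nat ->
  (forall y, (1 <= y <= m)%nat -> (J y < N)%nat) -> (1 <= x <= m)%nat ->
  digits_decode N m (digits_encode N m J) x = J x.
Proof.
  intros HN. induction m; intros H Hx; [lia|]. simpl.
  assert (HJ : (J (S m) < N)%nat) by (apply H; lia).
  rewrite Nat.mul_comm. destruct (Nat.eqb_spec x (S m)) as [->|Hne].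
  - rewrite Nat.Div0.mod_add. apply Nat.mod_small; auto.
  - rewrite Nat.div_add, Nat.div_small by lia. apply IHm; [intros; apply H|]; lia.
Qed.

Lemma nat_root_bracket K M : (1 <= K)%nat -> (1 <= M)%nat ->
  exists N, (1 <= N)%nat /\ (N ^ K <= M)%nat /\ (M < (N + 1) ^ K)%nat.
Proof.
  intros HK. induction M as [|M IH]; intros HM; [lia|].
  destruct (Nat.eq_dec M 0) as [->|HM0].
  { exists 1%nat. rewrite Nat.pow_1_l. split; [lia|split; [lia|]].
    pose proof (Nat.pow_lt_mono_l 1 2 K ltac:(lia) ltac:(lia)) as H.
    rewrite Nat.pow_1_l in H. exact H. }
  destruct (IH ltac:(lia)) as (N & HN & HNM & HMN).
  destruct (Nat.eq_dec (S M) ((N + 1) ^ K)) as [E|E].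
  - exists (N + 1)%nat. split; [lia|split; [lia|]].
    rewrite E. apply Nat.pow_lt_mono_l; lia.
  - exists N. lia.
Qed.

Lemma grid_gap_le N j m : (1 <= N)%nat -> 0 < m -> grid_pt N j <= m ->
  grid_pt N j + grid_pt N (S j) - grid_pt N j * grid_pt N (S j) / m - m
    <= 9 / (4 * (INR N * INR N)).
Proof.
  intros HN Hm Hl.
  assert (HNr : 1 <= INR N) by (apply (le_INR 1); lia).
  destruct j as [|j].
  - replace (grid_pt N 0) with 0 by (unfold grid_pt; simpl; field; lra).
    replace (grid_pt N 1) with (/ (INR N * INR N)) by (unfold grid_pt; simpl; field; lra).
    replace (9 / (4 * (INR N * INR N))) with (9 / 4 * / (INR N * INR N)) by (field; lra).
    assert (0 < / (INR N * INR N)) by (apply Rinv_0_lt_compat; nra).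
    replace (0 * / (INR N * INR N) / m) with 0 by (field; lra). lra.
  - assert (Hj1 : 1 <= INR (S j)) by (apply (le_INR 1); lia).
    assert (HT : 0 < grid_pt N (S j)) by (unfold grid_pt; apply Rdiv_lt_0_compat; nra).
    eapply Rle_trans; [apply (interval_gap_le _ _ m (grid_pt N (S j))); auto|].
    rewrite grid_pt_succ_sub by lia. unfold grid_pt.
    set (u := INR (S j)) in *. set (D := INR N * INR N) in *.
    assert (0 < D) by (unfold D; nra). clearbody u D.
    replace (((2 * u + 1) / D) ^ 2 / (4 * (u * u / D)))
      with ((2 * u + 1) * (2 * u + 1) / (4 * (u * u)) * / D) by (field; split; lra).
    replace (9 / (4 * D)) with (9 / 4 * / D) by (field; lra).
    apply Rmult_le_compat_r; [left; apply Rinv_0_lt_compat; lra|].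
    apply Rmult_le_reg_r with (4 * (u * u)); [nra|].
    replace ((2 * u + 1) * (2 * u + 1) / (4 * (u * u)) * (4 * (u * u)))
      with ((2 * u + 1) * (2 * u + 1)) by (field; lra).
    nra.
Qed.

Lemma neg_entropy_merge_eq n k (rho : nat -> nat -> R) :
  rsum k (fun i => neg_entropy n (rho i)) - neg_entropy n (fun x => rsum k (fun i => rho i x))
  = rsum n (fun x => rsum k (fun i => kl_term (rho i x) (rsum n (rho i)))
                    - kl_term (rsum k (fun i => rho i x)) (rsum k (fun i => rsum n (rho i)))).
Proof.
  unfold neg_entropy at 2. rewrite rsum_minus, (rsum_swap n k (fun x i => rho i x)).
  unfold neg_entropy. rewrite rsum_swap. reflexivity.
Qed.

Definition quantization_loss (K N : nat) : R :=
  (INR (S K) * INR K ^ 2 + 9 / 4 * INR K) / (INR N * INR N).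

Section MergeCell.

Variables (K N k : nat) (rho : nat -> nat -> R) (J : nat -> nat).
Hypothesis N_pos : (1 <= N)%nat.
Hypothesis rho_nonneg : forall i x, (i < k)%nat -> (x < S K)%nat -> 0 <= rho i x.
Hypothesis rho_max : forall i x, (i < k)%nat -> (x < S K)%nat -> rho i x <= rho i 0%nat.
Hypothesis J_lt : forall x, (1 <= x <= K)%nat -> (J x < N)%nat.
Hypothesis rho_grid : forall i x, (i < k)%nat -> (1 <= x <= K)%nat ->
  grid_pt N (J x) * rsum (S K) (rho i) <= rho i x <= grid_pt N (S (J x)) * rsum (S K) (rho i).

Let mass i := rsum (S K) (rho i).
Let total := rsum k mass.

Let coord_loss x := rsum k (fun i => kl_term (rho i x) (mass i))
                    - kl_term (rsum k (fun i => rho i x)) total.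

Lemma mass_nonneg i : (i < k)%nat -> 0 <= mass i.
Proof. intros Hi. apply rsum_nonneg. auto. Qed.

Lemma grid_coord_loss x : (1 <= x <= K)%nat -> coord_loss x <= 9 / (4 * (INR N * INR N)) * total.
Proof.
  intros Hx.
  apply (kl_merge_le k (fun i => rho i x) mass
           (grid_pt N (J x)) (grid_pt N (S (J x))) (grid_pt N (J x))).
  - intros i Hi. destruct (rho_grid i x Hi Hx).
    repeat split; auto using mass_nonneg. apply rho_nonneg; lia.
  - apply Rlt_le, Rdiv_lt_0_compat; [lra|]. pose proof (le_INR 1 N N_pos). simpl in *. nra.
  - intros m Hm Hl. apply grid_gap_le; auto.
Qed.

(* The top coordinate carries the remaining mass, so its ratio is pinned to an interval of
   width at most [K * 2 / N]; it is at least [1 / (S K)] because coordinate 0 is the largest. *)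
Lemma top_coord_loss : coord_loss 0%nat <= INR (S K) * INR K ^ 2 / (INR N * INR N) * total.
Proof.
  set (SA := rsum K (fun x => grid_pt N (J (S x)))).
  set (SB := rsum K (fun x => grid_pt N (S (J (S x))))).
  assert (HnR : 0 < INR (S K)) by (apply lt_0_INR; lia).
  assert (HNr : 1 <= INR N) by (apply (le_INR 1); lia).
  assert (HD : SB - SA <= INR K * (2 / INR N)).
  { unfold SA, SB. rewrite <- rsum_minus, <- rsum_const. apply rsum_le. intros x Hx.
    apply grid_pt_succ_sub_le, J_lt. lia. }
  assert (HD0 : SA <= SB).
  { apply rsum_le. intros x Hx. apply grid_pt_le; lia. }
  apply (kl_merge_le k (fun i => rho i 0%nat) mass (1 - SB) (1 - SA) (/ INR (S K))).
  - intros i Hi.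
    assert (Hsplit : mass i = rho i 0%nat + rsum K (fun x => rho i (S x)))
      by (apply rsum_first).
    assert (rsum K (fun x => rho i (S x)) <= SB * mass i).
    { unfold SB. rewrite Rmult_comm, <- rsum_scal. apply rsum_le. intros x Hx.
      rewrite Rmult_comm. apply (rho_grid i (S x)); auto; lia. }
    assert (SA * mass i <= rsum K (fun x => rho i (S x))).
    { unfold SA. rewrite Rmult_comm, <- rsum_scal. apply rsum_le. intros x Hx.
      rewrite Rmult_comm. apply (rho_grid i (S x)); auto; lia. }
    assert (mass i <= INR (S K) * rho i 0%nat).
    { unfold mass. rewrite <- rsum_const. apply rsum_le. auto. }
    repeat split; auto using mass_nonneg; try lra; [apply rho_nonneg; lia|].
    apply Rmult_le_reg_l with (INR (S K)); auto.
    replace (INR (S K) * (/ INR (S K) * mass i)) with (mass i) by (field; lra). lra.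
  - apply Rmult_le_pos; [apply Rmult_le_pos; [lra|apply pow_le, pos_INR]|].
    left. apply Rinv_0_lt_compat. nra.
  - intros m Hm Hl.
    eapply Rle_trans; [apply (interval_gap_le _ _ m (/ INR (S K))); auto; apply Rinv_0_lt_compat; auto|].
    replace ((1 - SA - (1 - SB)) ^ 2 / (4 * / INR (S K)))
      with (INR (S K) * (SB - SA) ^ 2 / 4) by (field; lra).
    assert ((SB - SA) ^ 2 <= (INR K * (2 / INR N)) ^ 2) by (apply pow_incr; lra).
    replace ((INR K * (2 / INR N)) ^ 2) with (4 * (INR K ^ 2 / (INR N * INR N))) in H
      by (field; lra).
    replace (INR (S K) * INR K ^ 2 / (INR N * INR N))
      with (INR (S K) * (INR K ^ 2 / (INR N * INR N))) by (field; lra).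
    nra.
Qed.

Lemma neg_entropy_merge_le :
  rsum k (fun i => neg_entropy (S K) (rho i))
  - neg_entropy (S K) (fun x => rsum k (fun i => rho i x))
  <= quantization_loss K N * rsum k (fun i => rsum (S K) (rho i)).
Proof.
  rewrite neg_entropy_merge_eq, rsum_first. fold mass total.
  change (coord_loss 0%nat + rsum K (fun x => coord_loss (S x))
          <= quantization_loss K N * total).
  assert (rsum K (fun x => coord_loss (S x))
          <= rsum K (fun _ => 9 / (4 * (INR N * INR N)) * total))
    by (apply rsum_le; intros; apply grid_coord_loss; lia).
  rewrite rsum_const in H. pose proof top_coord_loss.
  assert (HNr : 1 <= INR N) by (apply (le_INR 1); lia).
  unfold quantization_loss.
  replace ((INR (S K) * INR K ^ 2 + 9 / 4 * INR K) / (INR N * INR N) * total)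
    with (INR (S K) * INR K ^ 2 / (INR N * INR N) * total
          + INR K * (9 / (4 * (INR N * INR N)) * total)) by (field; lra).
  lra.
Qed.

End MergeCell.

Section CycloQuantizer.

Variables (K ny k N : nat) (f : nat -> nat -> nat) (W : channel).
Let n := S K.
Hypothesis N_pos : (1 <= N)%nat.
Hypothesis W_nonneg : forall x y, (x < n)%nat -> (y < ny)%nat -> 0 <= W y x.
Hypothesis W_sum : forall x, (x < n)%nat -> rsum ny (fun y => W y x) = 1.
Hypothesis f_range : forall i t, (i < k)%nat -> (t < n)%nat -> (f i t < ny)%nat.
Hypothesis f_inj : forall i t i' t', (i < k)%nat -> (t < n)%nat -> (i' < k)%nat -> (t' < n)%nat ->
  f i t = f i' t' -> i = i' /\ t = t'.
Hypothesis f_surj : forall y, (y < ny)%nat -> exists i t, (i < k)%nat /\ (t < n)%nat /\ f i t = y.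
Hypothesis W_cyclic : forall i x t, (i < k)%nat -> (x < n)%nat -> (t < n)%nat ->
  W (f i 0%nat) x = W (f i t) ((x + t) mod n)%nat.

(* Orbit [i] is represented by the column of its first output, rotated so that its largest
   entry sits at input [0]. *)
Definition rot i := argmax (fun x => W (f i 0%nat) x) (n - 1).
Definition profile i x := W (f i 0%nat) ((x + rot i) mod n)%nat.
Definition mass i := rsum n (profile i).

(* Orbits are quantised by the grid cells of the ratios [profile i x / mass i], [x = 1 .. K];
   orbits with the same [code] are merged, each output of a merged orbit keeping its rotation. *)
Definition cell i x := grid_floor N (profile i x / mass i) (N - 1).
Definition code i := digits_encode N K (cell i).
Definition out i t := (code i * n + (t + rot i) mod n)%nat.
Definition nz := (N ^ K * n)%nat.

Definition merge : channel := fun z y =>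
  rsum k (fun i => rsum n (fun t => if andb (Nat.eqb (f i t) y) (Nat.eqb z (out i t)) then 1 else 0)).
Definition Q : channel := fun z x => rsum ny (fun y => W y x * merge z y).
Definition merged c x := rsum k (fun i => if Nat.eqb (code i) c then profile i x else 0).

Lemma rot_lt i : (rot i < n)%nat.
Proof. pose proof (argmax_le (fun x => W (f i 0%nat) x) (n - 1)). unfold rot, n in *. lia. Qed.

Lemma W_unrotate i t y : (i < k)%nat -> (t < n)%nat -> (y < n)%nat ->
  W (f i t) y = W (f i 0%nat) ((y + (n - t)) mod n)%nat.
Proof.
  intros Hi Ht Hy.
  rewrite (W_cyclic i _ t Hi) by (auto; apply Nat.mod_upper_bound; unfold n; lia).
  rewrite mod_sub_add; auto.
Qed.

Lemma profile_nonneg i x : (i < k)%nat -> (x < n)%nat -> 0 <= profile i x.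
Proof.
  intros. apply W_nonneg; [apply Nat.mod_upper_bound|apply f_range]; unfold n in *; lia.
Qed.

Lemma profile_max i x : (i < k)%nat -> (x < n)%nat -> profile i x <= profile i 0%nat.
Proof.
  intros Hi Hx. unfold profile. rewrite Nat.add_0_l, (Nat.mod_small (rot i)) by apply rot_lt.
  apply argmax_max. pose proof (Nat.mod_upper_bound (x + rot i) n ltac:(unfold n; lia)).
  unfold n in *. lia.
Qed.

Lemma cell_lt i x : (cell i x < N)%nat.
Proof. pose proof (grid_floor_le N (profile i x / mass i) (N - 1)). unfold cell. lia. Qed.

Lemma code_lt i : (code i < N ^ K)%nat.
Proof. apply digits_encode_lt. intros. apply cell_lt. Qed.

Lemma out_lt i t : (out i t < nz)%nat.
Proof.
  pose proof (code_lt i). pose proof (Nat.mod_upper_bound (t + rot i) n ltac:(unfold n; lia)).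
  unfold out, nz. nia.
Qed.

Lemma profile_grid i x : (i < k)%nat -> (1 <= x <= K)%nat ->
  grid_pt N (cell i x) * mass i <= profile i x <= grid_pt N (S (cell i x)) * mass i.
Proof.
  intros Hi Hx.
  assert (Hpx : 0 <= profile i x) by (apply profile_nonneg; unfold n; lia).
  assert (profile i x <= mass i)
    by (apply rsum_term_le; [intros; apply profile_nonneg|unfold n]; auto; lia).
  destruct (Req_dec (mass i) 0) as [E|E].
  { rewrite E. replace (profile i x) with 0 by lra. lra. }
  assert (Hm : 0 < mass i) by lra.
  assert (Hq : 0 <= profile i x / mass i <= 1).
  { split; [apply Rmult_le_pos; [|left; apply Rinv_0_lt_compat]; auto|].
    apply Rmult_le_reg_r with (mass i); auto.
    replace (profile i x / mass i * mass i) with (profile i x) by (field; lra). lra. }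
  destruct (grid_floor_bracket N _ ltac:(lia) (proj1 Hq) (proj2 Hq)) as [Hlo Hhi].
  fold (cell i x) in Hlo, Hhi.
  apply Rmult_le_compat_r with (r := mass i) in Hlo, Hhi; try lra.
  replace (profile i x / mass i * mass i) with (profile i x) in Hlo, Hhi by (field; lra).
  lra.
Qed.

Lemma merge_channel : is_channel ny nz merge.
Proof.
  split.
  - intros y z Hy Hz. apply rsum_nonneg. intros. apply rsum_nonneg. intros.
    destruct (andb _ _); lra.
  - intros y Hy. unfold merge. rewrite rsum_swap.
    destruct (f_surj y Hy) as (i0 & t0 & Hi0 & Ht0 & <-).
    etransitivity; [|apply (rsum2_indicator k n f f_inj i0 t0 (fun _ _ => 1) Hi0 Ht0)].
    apply rsum_ext. intros i Hi. rewrite rsum_swap. apply rsum_ext. intros t Ht.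
    destruct (Nat.eqb (f i t) (f i0 t0)); simpl.
    + apply (rsum_delta nz (out i t) (fun _ => 1)), out_lt.
    + apply rsum_zero.
Qed.

Lemma Q_as_sum z x : Q z x =
  rsum k (fun i => rsum n (fun t => if Nat.eqb z (out i t) then W (f i t) x else 0)).
Proof.
  unfold Q, merge.
  rewrite (rsum_ext ny _ (fun y => rsum k (fun i => rsum n (fun t =>
    if Nat.eqb y (f i t) then (if Nat.eqb z (out i t) then W y x else 0) else 0)))).
  - rewrite rsum_swap. apply rsum_ext. intros i Hi. rewrite rsum_swap.
    apply rsum_ext. intros t Ht. apply (rsum_delta ny (f i t) (fun y => _)). auto.
  - intros y Hy. rewrite <- rsum_scal. apply rsum_ext. intros i Hi.
    rewrite <- rsum_scal. apply rsum_ext. intros t Ht.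
    rewrite (Nat.eqb_sym y).
    destruct (Nat.eqb (f i t) y), (Nat.eqb z (out i t)); simpl; ring.
Qed.

Lemma out_fibre_sum i c u x : (i < k)%nat -> (u < n)%nat -> (x < n)%nat ->
  rsum n (fun t => if Nat.eqb (c * n + u) (out i t) then W (f i t) x else 0)
  = if Nat.eqb (code i) c then profile i ((x + (n - u)) mod n) else 0.
Proof.
  intros Hi Hu Hx. pose proof (rot_lt i) as Hr.
  set (ts := ((u + (n - rot i)) mod n)%nat).
  assert (Hts : (ts < n)%nat) by (apply Nat.mod_upper_bound; unfold n; lia).
  assert (Hrot : forall t, (t < n)%nat -> ((t + rot i) mod n < n)%nat)
    by (intros; apply Nat.mod_upper_bound; unfold n; lia).
  destruct (Nat.eqb_spec (code i) c) as [<-|Ec].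
  - rewrite (rsum_ext n _ (fun t => if Nat.eqb t ts then W (f i t) x else 0)).
    + rewrite (rsum_delta n ts (fun t => W (f i t) x)), W_unrotate by auto.
      unfold profile. f_equal. apply mod_sub_sub; auto.
    + intros t Ht. unfold out.
      destruct (Nat.eqb_spec (code i * n + u) (code i * n + (t + rot i) mod n)) as [E1|E1];
        destruct (Nat.eqb_spec t ts) as [E2|E2]; auto; exfalso.
      * apply E2. apply (mod_add_eq_iff n (rot i) u t); auto. lia.
      * apply E1. f_equal. symmetry. apply (mod_add_eq_iff n (rot i) u t); auto.
  - rewrite (rsum_ext n _ (fun _ => 0)); [apply rsum_zero|].
    intros t Ht. unfold out.
    destruct (Nat.eqb_spec (c * n + u) (code i * n + (t + rot i) mod n)) as [E1|E1]; auto.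
    exfalso. apply Ec.
    apply (Nat.div_mod_unique n _ _ _ _ (Hrot t Ht) Hu). rewrite !(Nat.mul_comm n). lia.
Qed.

Lemma Q_class c u x : (u < n)%nat -> (x < n)%nat ->
  Q (c * n + u)%nat x = merged c ((x + (n - u)) mod n)%nat.
Proof.
  intros Hu Hx. rewrite Q_as_sum. apply rsum_ext. intros i Hi. apply out_fibre_sum; auto.
Qed.

Lemma Q_channel : is_channel n nz Q.
Proof.
  destruct merge_channel as [Hm0 Hm1]. split.
  - intros x z Hx Hz. apply rsum_nonneg. intros y Hy.
    apply Rmult_le_pos; [apply W_nonneg|apply Hm0]; auto.
  - intros x Hx. unfold Q. rewrite rsum_swap, <- (W_sum x Hx).
    apply rsum_ext. intros y Hy. rewrite rsum_scal, Hm1 by auto. ring.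
Qed.

Lemma Q_cyclo : cyclo_symmetric n nz Q.
Proof.
  assert (Hn : (0 < n)%nat) by (unfold n; lia).
  exists (N ^ K)%nat, (fun c u => (c * n + u)%nat).
  split; [reflexivity|]. split; [|split; [|split]].
  - intros. unfold nz. nia.
  - intros c u c' u' _ Hu _ Hu' E.
    destruct (Nat.div_mod_unique n c c' u u' Hu Hu' ltac:(lia)). auto.
  - intros y Hy. exists (y / n)%nat, (y mod n)%nat. split; [|split].
    + apply Nat.Div0.div_lt_upper_bound. unfold nz in Hy. lia.
    + apply Nat.mod_upper_bound. lia.
    + rewrite (Nat.div_mod_eq y n) at 3. lia.
  - intros c x t Hc Hx Ht.
    rewrite !Q_class by (try apply Nat.mod_upper_bound; lia). f_equal.
    rewrite Nat.sub_0_r, Nat.Div0.add_mod_idemp_l.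
    replace (x + t + (n - t))%nat with (x + n)%nat by lia. reflexivity.
Qed.

Lemma W_neg_entropy_sum :
  rsum ny (fun y => neg_entropy n (fun x => W y x)) = INR n * rsum k (fun i => neg_entropy n (profile i)).
Proof.
  rewrite (rsum_reindex2 k n ny f f_range f_inj f_surj), <- rsum_scal.
  apply rsum_ext. intros i Hi. rewrite <- rsum_const. apply rsum_ext. intros t Ht.
  rewrite (neg_entropy_ext n _ (fun y => W (f i 0%nat) ((y + (n - t)) mod n)%nat))
    by (intros; apply W_unrotate; auto).
  rewrite (neg_entropy_shift n (n - t) (fun y => W (f i 0%nat) y)) by (unfold n; lia).
  symmetry. apply (neg_entropy_shift n (rot i) (fun y => W (f i 0%nat) y)). unfold n. lia.
Qed.

Lemma Q_neg_entropy_sum :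
  rsum nz (fun z => neg_entropy n (fun x => Q z x)) = INR n * rsum (N ^ K) (fun c => neg_entropy n (merged c)).
Proof.
  unfold nz. rewrite rsum_mul_index, <- rsum_scal.
  apply rsum_ext. intros c Hc. rewrite <- rsum_const. apply rsum_ext. intros u Hu.
  rewrite (neg_entropy_ext n _ (fun x => merged c ((x + (n - u)) mod n)%nat))
    by (intros; apply Q_class; auto).
  apply neg_entropy_shift. unfold n. lia.
Qed.

Lemma mass_total : rsum k mass = 1.
Proof.
  assert (Hn : 0 < INR n) by (apply lt_0_INR; unfold n; lia).
  assert (E : rsum ny (fun y => rsum n (fun x => W y x)) = INR n).
  { rewrite rsum_swap, (rsum_ext n _ (fun _ => 1)) by (intros; apply W_sum; auto).
    rewrite rsum_const. ring. }
  apply Rmult_eq_reg_l with (INR n); [|lra]. rewrite Rmult_1_r. rewrite <- E at 2.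
  rewrite (rsum_reindex2 k n ny f f_range f_inj f_surj), <- rsum_scal.
  apply rsum_ext. intros i Hi. rewrite <- rsum_const. apply rsum_ext. intros t Ht.
  rewrite (rsum_ext n _ (fun y => W (f i 0%nat) ((y + (n - t)) mod n)%nat))
    by (intros; apply W_unrotate; auto).
  rewrite (rsum_shift n (n - t) (fun y => W (f i 0%nat) y)) by (unfold n; lia).
  unfold mass, profile. apply (rsum_shift n (rot i) (fun y => W (f i 0%nat) y)). unfold n. lia.
Qed.

Lemma merged_cell_loss c :
  rsum k (fun i => if Nat.eqb (code i) c then neg_entropy n (profile i) else 0)
  - neg_entropy n (merged c)
  <= quantization_loss K N * rsum k (fun i => if Nat.eqb (code i) c then mass i else 0).
Proof.
  set (rho := fun i x => if Nat.eqb (code i) c then profile i x else 0).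
  rewrite (rsum_ext k _ (fun i => neg_entropy n (rho i))).
  2:{ intros i Hi. unfold rho. destruct (Nat.eqb (code i) c); [reflexivity|].
      symmetry. apply neg_entropy_zero. }
  rewrite (rsum_ext k (fun i => if Nat.eqb (code i) c then mass i else 0) (fun i => rsum n (rho i)))
    by (intros; apply rsum_if).
  change (merged c) with (fun x => rsum k (fun i => rho i x)).
  apply (neg_entropy_merge_le K N k rho (digits_decode N K c)); auto.
  - intros i x Hi Hx. unfold rho. destruct (Nat.eqb (code i) c); [apply profile_nonneg|]; auto; lra.
  - intros i x Hi Hx. unfold rho. destruct (Nat.eqb (code i) c); [apply profile_max|]; auto; lra.
  - intros. apply digits_decode_lt. lia.
  - intros i x Hi Hx. unfold rho. destruct (Nat.eqb_spec (code i) c) as [<-|_].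
    + replace (digits_decode N K (code i) x) with (cell i x)
        by (symmetry; apply digits_decode_encode; auto; intros; apply cell_lt).
      apply profile_grid; auto.
    + rewrite rsum_zero. lra.
Qed.

Lemma mi_quantize_gap : mi_uniform n ny W - mi_uniform n nz Q <= quantization_loss K N.
Proof.
  assert (Hn : (0 < n)%nat) by (unfold n; lia).
  assert (HnR : 0 < INR n) by (apply lt_0_INR; lia).
  rewrite (mi_uniform_neg_entropy n ny W Hn (conj W_nonneg W_sum)),
          (mi_uniform_neg_entropy n nz Q Hn Q_channel), W_neg_entropy_sum, Q_neg_entropy_sum.
  replace (/ INR n * (INR n * rsum k (fun i => neg_entropy n (profile i))) + ln (INR n)
           - (/ INR n * (INR n * rsum (N ^ K) (fun c => neg_entropy n (merged c))) + ln (INR n)))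
    with (rsum k (fun i => neg_entropy n (profile i)) - rsum (N ^ K) (fun c => neg_entropy n (merged c)))
    by (field; lra).
  rewrite (rsum_partition k (N ^ K) code) by (intros; apply code_lt).
  rewrite <- rsum_minus.
  eapply Rle_trans; [apply rsum_le; intros c _; apply merged_cell_loss|].
  rewrite rsum_scal, <- (rsum_partition k (N ^ K) code mass) by (intros; apply code_lt).
  rewrite mass_total. lra.
Qed.

End CycloQuantizer.

Lemma exp_le_compat x y : x <= y -> exp x <= exp y.
Proof. intros [H| ->]; [left; apply exp_increasing|]; lra. Qed.

Lemma ln_le_compat x y : 0 < x -> x <= y -> ln x <= ln y.
Proof. intros Hx [H| ->]; [left; apply ln_increasing|]; lra. Qed.

Lemma gamma_half_bound K : 0 < gamma_half K <= sqrt (INR K + 1) ^ K.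
Proof.
  assert (Hstep : forall j, 0 < gamma_half j <= sqrt (INR j + 1) ^ j ->
                  0 < gamma_half (S (S j)) <= sqrt (INR (S (S j)) + 1) ^ S (S j)).
  { intros j [H0 H1]. change (gamma_half (S (S j))) with ((1 + INR j / 2) * gamma_half j).
    rewrite !S_INR. pose proof (pos_INR j).
    assert (Hsq : sqrt (INR j + 1 + 1 + 1) ^ 2 = INR j + 3)
      by (rewrite <- Rsqr_pow2, Rsqr_sqrt; lra).
    assert (sqrt (INR j + 1) ^ j <= sqrt (INR j + 1 + 1 + 1) ^ j)
      by (apply pow_incr; split; [apply sqrt_pos|apply sqrt_le_1_alt; lra]).
    split; [apply Rmult_lt_0_compat; lra|].
    replace (S (S j)) with (2 + j)%nat by lia. rewrite pow_add, Hsq.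
    apply Rmult_le_compat; lra. }
  assert (H01 : forall K, (0 < gamma_half K <= sqrt (INR K + 1) ^ K)
                       /\ (0 < gamma_half (S K) <= sqrt (INR (S K) + 1) ^ S K)).
  { induction K0 as [|K0 [IH1 IH2]]; [|split; auto].
    simpl.
    assert (0 < sqrt PI) by (apply sqrt_lt_R0, PI_RGT_0).
    assert (sqrt PI <= 2) by (rewrite <- (sqrt_pow2 2) by lra;
                              apply sqrt_le_1_alt; pose proof PI_4; lra).
    assert (1 <= sqrt (1 + 1))
      by (pose proof (sqrt_le_1_alt 1 (1 + 1) ltac:(lra)) as Hs; rewrite sqrt_1 in Hs; lra).
    repeat split; lra. }
  apply H01.
Qed.

(* [sqrt (1 + h) - 1 <= h / 2] with [h = 1 / (2 K)]. *)
Lemma nu_prefactor_ge K : (1 <= K)%nat ->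
  8 * PI * INR (S K) * INR K ^ 3 <=
  PI * INR (S K) * (INR (S K) - 1) / (2 * (sqrt (1 + / (2 * (INR (S K) - 1))) - 1) ^ 2).
Proof.
  intros HK. replace (INR (S K) - 1) with (INR K) by (rewrite S_INR; ring).
  assert (HK1 : 1 <= INR K) by (apply (le_INR 1); lia).
  assert (HPI : 0 < PI) by apply PI_RGT_0.
  set (h := / (2 * INR K)).
  assert (Hh : 0 < h) by (apply Rinv_0_lt_compat; lra).
  assert (hK : h * INR K = / 2) by (unfold h; field; lra).
  assert (Hu : sqrt (1 + h) <= 1 + h / 2)
    by (rewrite <- (sqrt_pow2 (1 + h / 2)) by lra; apply sqrt_le_1_alt; nra).
  assert (Hl : 1 < sqrt (1 + h))
    by (pose proof (sqrt_lt_1_alt 1 (1 + h) ltac:(lra)) as H; rewrite sqrt_1 in H; lra).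
  set (d := sqrt (1 + h) - 1).
  assert (Hd0 : 0 < d) by (unfold d; lra).
  assert (Hd2 : 0 < d ^ 2) by (apply pow_lt; lra).
  assert (Hd2' : d ^ 2 <= h * h / 4) by (unfold d; nra).
  assert (HSK : 0 < INR (S K)) by (apply lt_0_INR; lia).
  assert (Hc : 0 <= 8 * PI * INR (S K) * INR K ^ 3)
    by (apply Rmult_le_pos; [nra|apply pow_le; lra]).
  apply Rmult_le_reg_r with (2 * d ^ 2); [lra|].
  replace (PI * INR (S K) * INR K / (2 * d ^ 2) * (2 * d ^ 2)) with (PI * INR (S K) * INR K)
    by (field; lra).
  apply Rle_trans with (8 * PI * INR (S K) * INR K ^ 3 * (2 * (h * h / 4))).
  - apply Rmult_le_compat_l; lra.
  - replace (8 * PI * INR (S K) * INR K ^ 3 * (2 * (h * h / 4)))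
      with (PI * INR (S K) * INR K * (4 * (h * INR K) * (h * INR K))) by field.
    rewrite hK. lra.
Qed.

(* The Gamma factor is absorbed by [G^(2/K) <= S K], and [M < (N + 1)^K] gives
   [M^(-2/K) > (N + 1)^(-2)]. *)
Lemma rpower_factor_ge K M N : (1 <= K)%nat -> (1 <= N)%nat -> (M < (N + 1) ^ K)%nat ->
  (1 <= M)%nat ->
  / (INR (S K) * (INR N + 1) ^ 2)
  <= Rpower (2 * INR (S K) / gamma_half K) (2 / INR K) * Rpower (INR (S K * M)) (- (2 / INR K)).
Proof.
  intros HK HN HMN HM.
  destruct (gamma_half_bound K) as [HG0 HG1].
  set (n := INR (S K)) in *. set (G := gamma_half K) in *. set (k := INR K) in *.
  assert (Hk : 1 <= k) by (apply (le_INR 1); lia).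
  assert (Hn : n = k + 1) by apply S_INR.
  assert (HNr : 1 <= INR N) by (apply (le_INR 1); lia).
  assert (HMr : 1 <= INR M) by (apply (le_INR 1); lia).
  assert (Hln2 : 0 <= ln 2) by (rewrite <- ln_1; apply ln_le_compat; lra).
  assert (Hlnn : 0 <= ln n) by (rewrite <- ln_1; apply ln_le_compat; lra).
  assert (HlnG : 2 / k * ln G <= ln n).
  { apply ln_le_compat in HG1; auto. rewrite <- Hn, ln_pow in HG1 by
      (apply sqrt_lt_R0; lra).
    assert (Hs : 2 * ln (sqrt n) = ln n).
    { rewrite <- (sqrt_sqrt n) at 2 by lra. rewrite ln_mult by (apply sqrt_lt_R0; lra). lra. }
    apply Rmult_le_reg_l with (k / 2); [lra|].
    replace (k / 2 * (2 / k * ln G)) with (ln G) by (field; lra).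
    fold k in HG1. rewrite <- Hs. lra. }
  assert (HlnM : 2 / k * ln (INR M) <= 2 * ln (INR N + 1)).
  { apply lt_INR in HMN. rewrite pow_INR, plus_INR in HMN. simpl in HMN.
    apply ln_increasing in HMN; [|lra]. rewrite ln_pow in HMN by lra. fold k in HMN.
    apply Rmult_le_reg_l with (k / 2); [lra|].
    replace (k / 2 * (2 / k * ln (INR M))) with (ln (INR M)) by (field; lra).
    replace (k / 2 * (2 * ln (INR N + 1))) with (k * ln (INR N + 1)) by (field; lra). lra. }
  assert (H2k : 0 <= 2 / k * ln 2) by (apply Rmult_le_pos; [apply Rlt_le, Rdiv_lt_0_compat|]; lra).
  assert (E1 : ln (2 * n / G) = ln 2 + ln n - ln G).
  { unfold Rdiv. rewrite !ln_mult, ln_Rinv; try apply Rinv_0_lt_compat; lra. }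
  assert (E2 : ln (INR (S K * M)) = ln n + ln (INR M)) by (rewrite mult_INR; apply ln_mult; lra).
  assert (HD : 0 < n * (INR N + 1) ^ 2) by (apply Rmult_lt_0_compat; [|apply pow_lt]; lra).
  assert (E3 : ln (/ (n * (INR N + 1) ^ 2)) = - (ln n + 2 * ln (INR N + 1))).
  { rewrite ln_Rinv, ln_mult, ln_pow by (try apply pow_lt; lra). simpl INR. ring. }
  unfold Rpower. rewrite <- exp_plus, <- (exp_ln (/ (n * (INR N + 1) ^ 2)))
    by (apply Rinv_0_lt_compat; lra).
  apply exp_le_compat. rewrite E1, E2, E3. nra.
Qed.

Lemma quantization_loss_le_nu K M N : (1 <= K)%nat -> (1 <= N)%nat -> (1 <= M)%nat ->
  (M < (N + 1) ^ K)%nat ->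
  quantization_loss K N <= nu (S K) * Rpower (INR (S K * M)) (- (2 / (INR (S K) - 1))).
Proof.
  intros HK HN HM HMN.
  pose proof (nu_prefactor_ge K HK) as Hpre.
  pose proof (rpower_factor_ge K M N HK HN HMN HM) as Hpow.
  unfold nu, quantization_loss. replace (S K - 1)%nat with K by lia.
  replace (INR (S K) - 1) with (INR K) in * by (rewrite S_INR; ring).
  set (FF := PI * INR (S K) * INR K / _) in *.
  set (P := Rpower _ _ * Rpower _ _) in Hpow.
  replace (FF * Rpower (2 * INR (S K) / gamma_half K) (2 / INR K)
             * Rpower (INR (S K * M)) (- (2 / INR K))) with (FF * P) by (unfold P; ring).
  set (n := INR (S K)) in *. set (k := INR K) in *.
  assert (Hk : 1 <= k) by (apply (le_INR 1); lia).
  assert (Hn : n = k + 1) by apply S_INR.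
  assert (HNr : 1 <= INR N) by (apply (le_INR 1); lia).
  assert (HPI : 3 < PI) by (pose proof PI2_3_2; lra).
  assert (HD : / (n * (INR N + 1) ^ 2) >= / (4 * n * (INR N * INR N))).
  { apply Rle_ge, Rinv_le_contravar; [apply Rmult_lt_0_compat; [|apply pow_lt]; lra|].
    replace (4 * n * (INR N * INR N)) with (n * (4 * (INR N * INR N))) by ring.
    apply Rmult_le_compat_l; [lra|]. simpl. nra. }
  apply Rle_trans with (8 * PI * n * k ^ 3 * / (4 * n * (INR N * INR N))).
  - replace (8 * PI * n * k ^ 3 * / (4 * n * (INR N * INR N)))
      with (2 * PI * k ^ 3 / (INR N * INR N)) by (field; lra).
    unfold Rdiv. apply Rmult_le_compat_r; [left; apply Rinv_0_lt_compat; nra|].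
    rewrite Hn. replace (k ^ 3) with (k * k * k) by ring. replace (k ^ 2) with (k * k) by ring.
    assert (k <= k * k) by nra. assert (k * k <= k * k * k) by nra.
    assert (6 * (k * k * k) <= 2 * PI * (k * k * k)) by nra. nra.
  - apply Rmult_le_compat; try lra.
    + apply Rmult_le_pos; [|apply pow_le]; nra.
    + left. apply Rinv_0_lt_compat. nra.
Qed.

Theorem theorem8 (nx ny : nat) (W : channel) (L : nat) :
  (2 <= nx)%nat ->
  is_channel nx ny W ->
  cyclo_symmetric nx ny W ->
  (2 * nx < ny)%nat ->
  (2 * nx <= L)%nat ->
  Nat.divide nx L ->
  exists (nz : nat) (Q : channel),
    is_channel nx nz Q /\
    degraded nx ny nz Q W /\
    (nz <= L)%nat /\
    cyclo_symmetric nx nz Q /\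
    mi_uniform nx ny W - mi_uniform nx nz Q
      <= nu nx * Rpower (INR L) (- (2 / (INR nx - 1))).
Proof.
  intros Hnx [W_nonneg W_sum] (k & f & _ & f_range & f_inj & f_surj & W_cyclic) _ HL [M ->].
  destruct nx as [|K]; [lia|].
  assert (HK : (1 <= K)%nat) by lia.
  assert (HM : (1 <= M)%nat) by nia.
  destruct (nat_root_bracket K M HK HM) as (N & HN & HNM & HMN).
  exists (nz K N), (Q K ny k N f W).
  split; [|split; [|split; [|split]]].
  - eapply Q_channel; eauto.
  - exists (merge K k N f W). split; [eapply merge_channel; eauto|reflexivity].
  - unfold nz. nia.
  - eapply Q_cyclo; eauto.
  - eapply Rle_trans; [eapply mi_quantize_gap; eauto|].
    rewrite Nat.mul_comm. apply quantization_loss_le_nu; auto.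
Qed.
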